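(* Let $n\in\mathbb N$ and let $G\subset H$ be subgroups of the symmetric group $S_n$. If for a ballean $X$ the $G$-symmetric power $[X]^n_G$ is normal, then the $H$-symmetric power $[X]^n_H$ is normal.
   Context: A ballean is a pair $(X,\mathcal E_X)$ where $X$ is a set and $\mathcal E_X$ is a family of subsets of $X\times X$ (entourages) such that: each $E\in\mathcal E_X$ contains the diagonal $\Delta_X$; for any $E,F\in\mathcal E_X$ there is $D\in\mathcal E_X$ with $E\circ F^{-1}\subset D$; and $\bigcup\mathcal E_X=X\times X$. For $E\in\mathcal E_X$, $x\in X$, $A\subset X$: $E[x]=\{y:(x,y)\in E\}$, $E[A]=\bigcup_{a\in A}E[a]$. $B\subset X$ is bounded if $B\subset E[x]$ for some $E\in\mathcal E_X$, $x\in X$; $\mathcal B_X$ is the family of bounded sets. Sets $A,B$ are asymptotically disjoint if $E[A]\cap E[B]\in\mathcal B_X$ for all $E\in\mathcal E_X$; $U$ is an asymptotic neighborhood of $A$ if $E[A]\setminus U\in\mathcal B_X$ for all $E$; $X$ is normal if any two asymptotically disjoint sets have disjoint asymptotic neighborhoods. The power $X^n$ ($n=\{0,\dots,n-1\}$) has entourages $\{(x,y)\in X^n\times X^n:(x(i),y(i))\in E_i\ \forall i\}$, $E_i\in\mathcal E_X$. For a subgroup $G\subset S_n$, $[X]^n_G=\{xG:x\in X^n\}$ where $xG=\{x\circ g:g\in G\}$, with entourages $\hat E=\{(xG,yG):(x,y)\in E\}$ for $E$ an entourage of $X^n$. *)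

From mathcomp Require Import all_boot all_fingroup.
Set Implicit Arguments. Unset Strict Implicit. Unset Printing Implicit Defensive.

Section Ballean.
Variable T : Type.
Variable ent : (T -> T -> Prop) -> Prop.

Definition comp_inv (E F : T -> T -> Prop) : T -> T -> Prop :=
  fun x z => exists y, E x y /\ F z y.

Definition is_ballean : Prop :=
  [/\ (forall E, ent E -> forall x, E x x),
      (forall E F, ent E -> ent F -> exists D, ent D /\
          forall x z, comp_inv E F x z -> D x z)
    & (forall x y, exists E, ent E /\ E x y)].

Definition ball (E : T -> T -> Prop) (A : T -> Prop) : T -> Prop :=
  fun y => exists2 a, A a & E a y.

Definition bounded (B : T -> Prop) : Prop :=
  exists E x, ent E /\ forall y, B y -> E x y.

Definition asym_disjoint (A B : T -> Prop) : Prop :=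
  forall E, ent E -> bounded (fun y => ball E A y /\ ball E B y).

Definition asym_nbhd (U A : T -> Prop) : Prop :=
  forall E, ent E -> bounded (fun y => ball E A y /\ ~ U y).

Definition normal_ballean : Prop :=
  forall A B, asym_disjoint A B ->
    exists U V, [/\ asym_nbhd U A, asym_nbhd V B & forall y, ~ (U y /\ V y)].
End Ballean.

Section SymPower.
Variables (X : Type) (ent : (X -> X -> Prop) -> Prop) (n : nat).

Definition pow_ent : (('I_n -> X) -> ('I_n -> X) -> Prop) -> Prop :=
  fun R => exists Es : 'I_n -> X -> X -> Prop,
    (forall i, ent (Es i)) /\ R = (fun x y => forall i, Es i (x i) (y i)).

Definition orb (G : {group {perm 'I_n}}) (x : 'I_n -> X) : ('I_n -> X) -> Prop :=
  fun y => exists2 g, g \in G & y = x \o g.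

Definition sympow (G : {group {perm 'I_n}}) : Type :=
  {S : ('I_n -> X) -> Prop | exists x, S = orb G x}.

Definition sym_ent (G : {group {perm 'I_n}}) :
    (sympow G -> sympow G -> Prop) -> Prop :=
  fun R => exists E, pow_ent E /\
    R = (fun S S' => exists x y,
           [/\ proj1_sig S = orb G x, proj1_sig S' = orb G y & E x y]).
End SymPower.
Arguments pow_ent {X} ent n.
Arguments sym_ent {X} ent {n} G.
Arguments sympow X {n} G.

From mathcomp Require Import all_boot all_fingroup.
From Stdlib Require Import FunctionalExtensionality PropExtensionality.
From Stdlib Require Import ProofIrrelevance Classical ClassicalEpsilon.
Set Implicit Arguments. Unset Strict Implicit. Unset Printing Implicit Defensive.

(* The projection xG |-> xH of [X]^n_G onto [X]^n_H is surjective and maps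
   entourages into entourages; entourages lift along it (reindex both points by
   the same permutation, after enlarging every coordinate entourage to contain
   all of them); and preimages of bounded sets are bounded (a ball around xH,
   read upstairs, lies in a ball around xG once every coordinate entourage
   reaches from x_j to each x_k and past the entourages of the original ball).
   Along any such map normality descends: pull asymptotically disjoint sets
   back, separate them upstairs, and take as neighbourhoods downstairs the
   points whose whole fibre lies in the neighbourhoods upstairs. *)

Section BalleanEntourages.
Variables (T : Type) (ent : (T -> T -> Prop) -> Prop).
Hypothesis ballT : is_ballean ent.

Lemma bounded_sub (A B : T -> Prop) :
  (forall x, A x -> B x) -> bounded ent B -> bounded ent A.
Proof. by move=> AB [E [x [entE BE]]]; exists E, x; split => // y /AB/BE. Qed.

Lemma ent_refl E x : ent E -> E x x.
Proof. by case: ballT => refl _ _ /refl. Qed.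

Lemma ent_comp E F : ent E -> ent F ->
  exists2 D, ent D & forall x y z, E x y -> F y z -> D x z.
Proof.
case: ballT => _ comp_invP _ entE entF.
have [Fi [entFi FFi]] := comp_invP F F entF entF.
have [D [entD DE]] := comp_invP E Fi entE entFi.
exists D => // x y z Exy Fyz; apply: DE; exists y; split => //.
by apply: FFi; exists z; split => //; apply: ent_refl.
Qed.

Lemma ent_union E F : ent E -> ent F -> exists2 D, ent D &
  (forall x y, E x y -> D x y) /\ (forall x y, F x y -> D x y).
Proof.
move=> entE entF; have [D entD DEF] := ent_comp entE entF.
exists D => //; split => x y.
  by move/DEF; apply; apply: ent_refl.
by apply: DEF; apply: ent_refl.
Qed.

Lemma ent_bigU (I : finType) (Es : I -> T -> T -> Prop) E0 :
  ent E0 -> (forall i, ent (Es i)) -> exists2 D, ent D &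
  (forall x y, E0 x y -> D x y) /\ (forall i x y, Es i x y -> D x y).
Proof.
move=> entE0 entEs.
suff [D entD [E0D EsD]] : exists2 D, ent D & (forall x y, E0 x y -> D x y) /\
    (forall i, i \in enum I -> forall x y, Es i x y -> D x y).
  by exists D => //; split => // i; apply: EsD; rewrite mem_enum.
elim: (enum I) => [|i s [D entD [E0D EsD]]]; first by exists E0.
have [D' entD' [DD' EiD']] := ent_union entD (entEs i).
exists D' => //; split=> [x y /E0D/DD' //|j].
by rewrite in_cons => /predU1P[-> //|/EsD sD x y /sD/DD'].
Qed.

Lemma ent_around (I J : finType) (z : I -> T) (Fs : J -> T -> T -> Prop) x :
  (forall m, ent (Fs m)) ->
  exists2 D, ent D & forall k m y, Fs m (z k) y -> D x y.
Proof.
case: (ballT) => _ _ connT entFs.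
have [C entC Cxz] : exists2 C : I -> T -> T -> Prop,
    forall k, ent (C k) & forall k, C k x (z k).
  apply: (@fin_all_exists2 _ (fun=> T -> T -> Prop) (fun _ C => ent C)
    (fun k C => C x (z k))) => k.
  by have [C []] := connT x (z k); exists C.
have [E0 [entE0 _]] := connT x x.
pose Es (i : I + J) := match i with inl k => C k | inr m => Fs m end.
have entEs i : ent (Es i) by case: i.
have [U entU [_ EsU]] := ent_bigU entE0 entEs.
have [D entD UUD] := ent_comp entU entU.
exists D => // k m y Fy; apply: (UUD _ (z k)).
  exact: (EsU (inl k)).
exact: (EsU (inr m)).
Qed.

End BalleanEntourages.

Section NormalityAlongMaps.
Variables (Y Z : Type) (entY : (Y -> Y -> Prop) -> Prop).
Variables (entZ : (Z -> Z -> Prop) -> Prop) (f : Y -> Z).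

Definition bornologous : Prop := forall E, entY E ->
  exists2 E', entZ E' & forall x y, E x y -> E' (f x) (f y).

Definition preimage_bounded : Prop :=
  forall B, bounded entZ B -> bounded entY (fun y => B (f y)).

Definition lifts_entourages : Prop := forall E, entZ E ->
  exists2 E', entY E' & forall z y, E z (f y) -> exists2 w, f w = z & E' w y.

Lemma bornologous_bounded : bornologous ->
  forall B, bounded entY B -> bounded entZ (fun z => exists2 y, B y & f y = z).
Proof.
move=> fE B [E [x [/fE[E' entE' EE'] BE]]].
by exists E', (f x); split => // _ [y /BE Exy <-]; apply: EE'.
Qed.

Lemma asym_disjoint_preimage A B : bornologous -> preimage_bounded ->
  asym_disjoint entZ A B ->
  asym_disjoint entY (fun y => A (f y)) (fun y => B (f y)).
Proof.
move=> fE fB AB E /fE[E' entE' EE']; apply: bounded_sub (fB _ (AB E' entE')).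
move=> y [[a Aa Eay] [b Bb Eby]].
by split; [exists (f a) | exists (f b)] => //; apply: EE'.
Qed.

Lemma asym_nbhd_fibre A U : bornologous -> lifts_entourages ->
  asym_nbhd entY U (fun y => A (f y)) ->
  asym_nbhd entZ (fun z => forall y, f y = z -> U y) A.
Proof.
move=> fE fL AU E /fL[E' entE' EE'].
apply: bounded_sub (bornologous_bounded fE (AU E' entE')).
move=> z [[a Aa Eaz] notU].
have [y nUy] := not_all_ex_not _ _ notU.
have [fyz Uy] := imply_to_and _ _ nUy.
exists y => //; split => //; subst z.
by have [w fwa E'wy] := EE' _ _ Eaz; exists w; rewrite ?fwa.
Qed.

Lemma normal_ballean_image : (forall z, exists y, f y = z) ->
  bornologous -> preimage_bounded -> lifts_entourages ->
  normal_ballean entY -> normal_ballean entZ.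
Proof.
move=> fS fE fB fL NY A B /(asym_disjoint_preimage fE fB).
case/NY=> U [V [AU BV UV]].
exists (fun z => forall y, f y = z -> U y), (fun z => forall y, f y = z -> V y).
split; [exact: asym_nbhd_fibre | exact: asym_nbhd_fibre |].
move=> z [Uz Vz]; have [y fyz] := fS z.
by apply: (UV y); split; [apply: Uz | apply: Vz].
Qed.

End NormalityAlongMaps.

Section PowerEntourages.
Variables (X : Type) (ent : (X -> X -> Prop) -> Prop) (n : nat).
Hypothesis ballX : is_ballean ent.

Lemma pow_ent_reindex F : pow_ent ent n F -> exists2 K, pow_ent ent n K &
  forall (t : 'I_n -> 'I_n) x y, F x y -> K (x \o t) (y \o t).
Proof.
case=> Fs [entFs ->].
have [Ks entKs FsKs] : exists2 Ks : 'I_n -> X -> X -> Prop,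
    forall i, ent (Ks i) & forall i j x y, Fs j x y -> Ks i x y.
  apply: (@fin_all_exists2 _ (fun=> X -> X -> Prop) (fun _ D => ent D)
    (fun _ D => forall j x y, Fs j x y -> D x y)) => i.
  by have [D entD [_ FsD]] := ent_bigU ballX (entFs i) entFs; exists D.
exists (fun x y => forall i, Ks i (x i) (y i)); first by exists Ks.
by move=> t x y Fxy i; apply: FsKs (Fxy (t i)).
Qed.

Lemma pow_ent_reindex_around F (z : 'I_n -> X) : pow_ent ent n F ->
  exists2 K, pow_ent ent n K &
  forall (s t : 'I_n -> 'I_n) y, F (z \o s) y -> K z (y \o t).
Proof.
case=> Fs [entFs ->].
have [Ks entKs FsKs] : exists2 Ks : 'I_n -> X -> X -> Prop,
    forall j, ent (Ks j) & forall j k m y, Fs m (z k) y -> Ks j (z j) y.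
  apply: (@fin_all_exists2 _ (fun=> X -> X -> Prop) (fun _ D => ent D)
    (fun j D => forall k m y, Fs m (z k) y -> D (z j) y)) => j.
  exact: ent_around.
exists (fun x y => forall i, Ks i (x i) (y i)); first by exists Ks.
by move=> s t y Fzy j; apply: FsKs (Fzy (t j)).
Qed.

End PowerEntourages.

Section SymmetricPowers.
Variables (X : Type) (n : nat).
Implicit Types (K G H : {group {perm 'I_n}}) (x y : 'I_n -> X).

Lemma orb_refl K x : orb K x x.
Proof.
exists 1%g; first exact: group1.
by apply: functional_extensionality => i /=; rewrite perm1.
Qed.

Lemma orb_eqP K x y : orb K x = orb K y -> exists2 k, k \in K & y = x \o k.
Proof. by move=> e; have := orb_refl K y; rewrite -e. Qed.

Lemma orb_comp K x k : k \in K -> orb K (x \o k) = orb K x.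
Proof.
move=> kK; apply: functional_extensionality => w.
apply: propositional_extensionality.
split=> [[g gK ->]|[g gK ->]].
  exists (g * k)%g; first by rewrite groupM.
  by apply: functional_extensionality => i /=; rewrite permM.
exists (g * k^-1)%g; first by rewrite groupM ?groupV.
by apply: functional_extensionality => i /=; rewrite permM permKV.
Qed.

Lemma orb_subgroup G H x y :
  G \subset H -> orb G x = orb G y -> orb H x = orb H y.
Proof. by move=> sGH /orb_eqP[k /(subsetP sGH) kH ->]; rewrite orb_comp. Qed.

Definition sym_of K x : sympow X K := exist _ (orb K x) (ex_intro _ x erefl).

Definition sym_rel K (E : ('I_n -> X) -> ('I_n -> X) -> Prop) :
    sympow X K -> sympow X K -> Prop :=
  fun S S' => exists x y,
    [/\ proj1_sig S = orb K x, proj1_sig S' = orb K y & E x y].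

Definition sym_repr K (S : sympow X K) : 'I_n -> X :=
  proj1_sig (constructive_indefinite_description _ (proj2_sig S)).

Lemma sym_reprE K (S : sympow X K) : proj1_sig S = orb K (sym_repr S).
Proof.
exact: proj2_sig (constructive_indefinite_description _ (proj2_sig S)).
Qed.

Lemma sym_ofE K (S : sympow X K) x : proj1_sig S = orb K x -> S = sym_of K x.
Proof.
case: S => s ps /= e; subst s; congr exist; exact: proof_irrelevance.
Qed.

Definition sym_proj G H (S : sympow X G) : sympow X H := sym_of H (sym_repr S).

Lemma sym_projE G H x : G \subset H -> sym_proj H (sym_of G x) = sym_of H x.
Proof.
move=> sGH; apply: sym_ofE => /=.
by apply: orb_subgroup sGH _; rewrite -sym_reprE.
Qed.

End SymmetricPowers.
Arguments sym_rel {X n} K E.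

Section SubgroupProjection.
Variables (n : nat) (G H : {group {perm 'I_n}}).
Variables (X : Type) (ent : (X -> X -> Prop) -> Prop).
Hypotheses (sGH : G \subset H) (ballX : is_ballean ent).

Local Notation proj := (@sym_proj X n G H).

Lemma sym_proj_surj (S : sympow X H) : exists T, proj T = S.
Proof.
exists (sym_of G (sym_repr S)); rewrite sym_projE //.
by apply/esym/sym_ofE/sym_reprE.
Qed.

Lemma sym_proj_bornologous : bornologous (sym_ent ent G) (sym_ent ent H) proj.
Proof.
move=> _ [F [powF ->]]; eexists; first by exists F.
move=> _ _ [x [y [/sym_ofE-> /sym_ofE-> Fxy]]].
by rewrite !sym_projE //; exists x, y.
Qed.

Lemma sym_proj_preimage_bounded :
  preimage_bounded (sym_ent ent G) (sym_ent ent H) proj.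
Proof.
move=> B [_ [c [[F [powF ->]] Bc]]].
have [K powK FK] := pow_ent_reindex_around ballX (sym_repr c) powF.
exists (sym_rel G K), (sym_of G (sym_repr c)).
split; first by exists K.
move=> T /Bc[x [y [cx Ty Fxy]]].
have [h _ ex] := orb_eqP (etrans (esym (sym_reprE c)) cx).
have [t _ eT] := orb_eqP (esym Ty).
exists (sym_repr c), (sym_repr T); split=> //; first exact: sym_reprE.
by rewrite eT; apply: (FK h); rewrite -ex.
Qed.

Lemma sym_proj_lifts_entourages :
  lifts_entourages (sym_ent ent G) (sym_ent ent H) proj.
Proof.
move=> _ [F [powF ->]].
have [K powK FK] := pow_ent_reindex ballX powF.
exists (sym_rel G K); first by exists K.
move=> S T [x [y [Sx Ty Fxy]]].
have [h hH eT] := orb_eqP (esym Ty).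
exists (sym_of G (x \o h)).
  by rewrite sym_projE // (sym_ofE Sx); apply: sym_ofE; rewrite /= orb_comp.
exists (x \o h), (y \o h); split=> //; last exact: FK.
by rewrite sym_reprE eT.
Qed.

End SubgroupProjection.

Theorem theorem1p13 (n : nat) (G H : {group {perm 'I_n}}) (X : Type)
    (ent : (X -> X -> Prop) -> Prop) :
  G \subset H ->
  is_ballean ent ->
  normal_ballean (sym_ent ent G) ->
  normal_ballean (sym_ent ent H).
Proof.
move=> sGH ballX.
apply: (normal_ballean_image (f := sym_proj H)).
- exact: sym_proj_surj.
- exact: sym_proj_bornologous.
- exact: sym_proj_preimage_bounded.
- exact: sym_proj_lifts_entourages.
Qed.
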